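(* Let $X$ be a finite-dimensional real Hilbert space and $A,B$ closed convex subsets of $X$ with $\operatorname{ri}A\cap\operatorname{ri}B\ne\varnothing$. Let $L=\operatorname{aff}(A\cup B)$, $T=P_BR_A+\mathrm{Id}-P_A$, and let $c\in A\cap B$. Then there exist $\delta>0$ and $\theta\in[0,1[$ such that for all $x\in L$ with $\|x-c\|\le\delta$: $\langle P_Ax-R_Ax,\;P_BR_Ax-R_Ax\rangle\le\theta\,d_A(x)\,d_B(R_Ax)$, and consequently $\|x-Tx\|^2\ge\frac{1-\theta}{5}\max\{d_A^2(x),d_B^2(x)\}$.
   Context: $P_S$ is the metric projection onto a closed convex set $S$, $R_S=2P_S-\mathrm{Id}$, $d_S$ the distance function, $\operatorname{aff}$ the affine hull, $\operatorname{ri}$ the relative interior. *)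

From Stdlib Require Import Reals List ClassicalEpsilon.
From mathcomp Require Import ssreflect ssrfun ssrbool eqtype ssrnat seq fintype bigop.
Open Scope R_scope.

(* The finite-dimensional real Hilbert space R^n with the standard vinner product. *)
Definition vec (n : nat) := 'I_n -> R.

Definition vzero {n} : vec n := fun _ => 0.
Definition vadd {n} (u v : vec n) : vec n := fun i => u i + v i.
Definition vsub {n} (u v : vec n) : vec n := fun i => u i - v i.
Definition vscale {n} (a : R) (u : vec n) : vec n := fun i => a * u i.

Definition vinner {n} (u v : vec n) : R := \big[Rplus/0]_(i < n) (u i * v i).
Definition vnorm {n} (u : vec n) : R := sqrt (vinner u u).

Definition closedS {n} (S : vec n -> Prop) : Prop :=
  forall x, (forall eps, 0 < eps -> exists y, S y /\ vnorm (vsub x y) < eps) -> S x.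

Definition convexS {n} (S : vec n -> Prop) : Prop :=
  forall x y t, S x -> S y -> 0 <= t <= 1 ->
    S (vadd (vscale t x) (vscale (1 - t) y)).

Definition aff {n} (S : vec n -> Prop) : vec n -> Prop :=
  fun x => exists l : seq (R * vec n),
    (forall p, List.In p l -> S (snd p)) /\
    foldr (fun p s => fst p + s) 0 l = 1 /\
    x = foldr (fun p v => vadd (vscale (fst p) (snd p)) v) vzero l.

Definition ri {n} (S : vec n -> Prop) : vec n -> Prop :=
  fun x => S x /\ exists eps, 0 < eps /\
    forall y, aff S y -> vnorm (vsub y x) < eps -> S y.

Definition setU2 {n} (A B : vec n -> Prop) : vec n -> Prop := fun x => A x \/ B x.

Definition is_proj {n} (S : vec n -> Prop) (x p : vec n) : Prop :=
  S p /\ forall y, S y -> vnorm (vsub x p) <= vnorm (vsub x y).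

(* metric projection P_S (well defined for nonempty closed convex S) *)
Definition proj {n} (S : vec n -> Prop) (x : vec n) : vec n :=
  epsilon (inhabits vzero) (fun p => is_proj S x p).

Definition refl {n} (S : vec n -> Prop) (x : vec n) : vec n :=
  vsub (vscale 2 (proj S x)) x.

Definition dS {n} (S : vec n -> Prop) (x : vec n) : R := vnorm (vsub x (proj S x)).

Definition Tdr {n} (A B : vec n -> Prop) (x : vec n) : vec n :=
  vsub (vadd (proj B (refl A x)) x) (proj A x).

From HB Require Import structures.
From Stdlib Require Import Reals Lra Psatz Rtopology.
From Stdlib Require Import FunctionalExtensionality Classical ClassicalEpsilon.
From mathcomp Require Import ssreflect ssrfun ssrbool eqtype ssrnat seq fintype bigop.
Open Scope R_scope.

(* Write [U x = x - P_A x] and [V x = P_B (R_A x) - R_A x]; then [P_A x - R_A x = U x],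
   [x - T x = U x - V x] and [x - P_B (R_A x) = 2 U x - V x].  The heart of the matter
   is a uniform bound [<U x, V x> <= theta |U x| |V x|] near [c].  If it failed, a
   sequence [x_k -> c] in [aff (A u B)] with cosines tending to 1 would give, after
   normalising [U] and extracting a convergent subsequence, a unit vector [u] normal
   to [A] and opposite-normal to [B] at [c].  As [ri A] and [ri B] meet, such a [u] is
   orthogonal to [aff (A u B) - c]; but [u] is a limit of unit vectors of that
   subspace.  The estimate on [|x - T x|] then follows from
   [|U - V|^2 >= (1 - theta) (|U|^2 + |V|^2)] and [|2 U - V|^2 <= 5 (|U|^2 + |V|^2)]. *)

HB.instance Definition _ := Monoid.isComLaw.Build R 0 Rplus
  (fun a b c => esym (Rplus_assoc a b c)) Rplus_comm Rplus_0_l.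

Lemma big_Rplus_comb (I : Type) (r : seq I) (P : pred I) (F G : I -> R) a b :
  \big[Rplus/0]_(i <- r | P i) (a * F i + b * G i) =
  a * \big[Rplus/0]_(i <- r | P i) F i + b * \big[Rplus/0]_(i <- r | P i) G i.
Proof.
elim: r => [|x r IH]; rewrite ?big_nil ?big_cons; first ring.
by case: (P x); rewrite IH; ring.
Qed.

Lemma big_Rplus_ge0 (I : Type) (r : seq I) (P : pred I) (F : I -> R) :
  (forall i, 0 <= F i) -> 0 <= \big[Rplus/0]_(i <- r | P i) F i.
Proof.
move=> F_ge0; elim: r => [|x r IH]; rewrite ?big_nil ?big_cons; first lra.
by case: (P x) => //; have := F_ge0 x; lra.
Qed.

Ltac vec_ext := apply: functional_extensionality => ? /=;
  unfold vsub, vadd, vscale, vzero; ring.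

Section InnerProduct.
Context {n : nat}.
Implicit Types u v w : vec n.

Lemma vinnerC u v : vinner u v = vinner v u.
Proof. by apply: eq_bigr => i _; ring. Qed.

Lemma vinner_combl u v w a b :
  vinner (fun i => a * u i + b * v i) w = a * vinner u w + b * vinner v w.
Proof. by rewrite /vinner -big_Rplus_comb; apply: eq_bigr => i _; ring. Qed.

Lemma vinnerDl u v w : vinner (vadd u v) w = vinner u w + vinner v w.
Proof.
rewrite -[vinner u w]Rmult_1_l -[vinner v w]Rmult_1_l -vinner_combl.
by apply: eq_bigr => i _; rewrite /vadd; ring.
Qed.

Lemma vinnerBl u v w : vinner (vsub u v) w = vinner u w - vinner v w.
Proof.
have -> : vinner u w - vinner v w = 1 * vinner u w + -1 * vinner v w by ring.
by rewrite -vinner_combl; apply: eq_bigr => i _; rewrite /vsub; ring.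
Qed.

Lemma vinnerZl a u w : vinner (vscale a u) w = a * vinner u w.
Proof.
rewrite -[a * _]Rplus_0_r -[0 in RHS](Rmult_0_l (vinner u w)) -vinner_combl.
by apply: eq_bigr => i _; rewrite /vscale; ring.
Qed.

Lemma vinnerDr u v w : vinner w (vadd u v) = vinner w u + vinner w v.
Proof. by rewrite vinnerC vinnerDl !(vinnerC w). Qed.

Lemma vinnerBr u v w : vinner w (vsub u v) = vinner w u - vinner w v.
Proof. by rewrite vinnerC vinnerBl !(vinnerC w). Qed.

Lemma vinnerZr a u w : vinner w (vscale a u) = a * vinner w u.
Proof. by rewrite vinnerC vinnerZl vinnerC. Qed.

Lemma vinner0r u : vinner u vzero = 0.
Proof. by rewrite /vinner big1 // => i _; rewrite /vzero; ring. Qed.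

Lemma vinner_ge0 u : 0 <= vinner u u.
Proof. by apply: big_Rplus_ge0 => i; nra. Qed.

Lemma sqr_coord_le_vinner u i : u i ^ 2 <= vinner u u.
Proof.
rewrite /vinner (bigD1 i) //=.
set rest := \big[Rplus/0]_(j < n | _) _.
have : 0 <= rest by apply: big_Rplus_ge0 => j; nra.
nra.
Qed.

Lemma vinner_subsub u v :
  vinner (vsub u v) (vsub u v) = vinner u u - 2 * vinner u v + vinner v v.
Proof. by rewrite vinnerBl !vinnerBr (vinnerC v u); ring. Qed.

Lemma vinner_subC u v : vinner (vsub u v) (vsub u v) = vinner (vsub v u) (vsub v u).
Proof. by rewrite !vinner_subsub (vinnerC u v); ring. Qed.

(* The defect of [(a^2 + b^2) (|u|^2 + |v|^2) >= |a u - b v|^2] is [|b u + a v|^2]. *)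
Lemma vinner_comb_le a b u v :
  vinner (vsub (vscale a u) (vscale b v)) (vsub (vscale a u) (vscale b v))
  <= (a ^ 2 + b ^ 2) * (vinner u u + vinner v v).
Proof.
have := vinner_ge0 (vadd (vscale b u) (vscale a v)).
rewrite vinner_subsub vinnerDl !vinnerDr !vinnerZl !vinnerZr (vinnerC v u); nra.
Qed.

Lemma vnorm_sqr u : vnorm u ^ 2 = vinner u u.
Proof. by rewrite /vnorm /= Rmult_1_r sqrt_sqrt //; apply: vinner_ge0. Qed.

Lemma vnorm_ge0 u : 0 <= vnorm u.
Proof. exact: sqrt_pos. Qed.

Lemma vnorm_le u v : vnorm u <= vnorm v <-> vinner u u <= vinner v v.
Proof.
split=> [|h]; last exact: sqrt_le_1_alt.
by rewrite -!vnorm_sqr; have := vnorm_ge0 u; nra.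
Qed.

Lemma vnorm_subC u v : vnorm (vsub u v) = vnorm (vsub v u).
Proof. by rewrite /vnorm vinner_subC. Qed.

Lemma vnormZ a u : vnorm (vscale a u) = Rabs a * vnorm u.
Proof.
rewrite /vnorm vinnerZl vinnerZr -Rmult_assoc sqrt_mult; [|nra|exact: vinner_ge0].
by rewrite -(Rsqr_def a) sqrt_Rsqr_abs.
Qed.

Lemma vnorm0_vinner u v : vnorm u = 0 -> vinner u v = 0.
Proof.
move=> u0; have uu0 : vinner u u = 0 by rewrite -vnorm_sqr u0; ring.
rewrite /vinner big1 // => i _.
have := sqr_coord_le_vinner u i; rewrite uu0 => ?.
have -> : u i = 0 by nra.
ring.
Qed.

Definition vunit u := vscale (/ vnorm u) u.

Lemma vunit_sqr u : 0 < vnorm u -> vinner (vunit u) (vunit u) = 1.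
Proof. by move=> u_gt0; rewrite vinnerZl vinnerZr -vnorm_sqr; field; lra. Qed.

Lemma vnorm_gt0_of_cos {e u v} :
  (1 - e) * vnorm u * vnorm v < vinner u v -> 0 < vnorm u /\ 0 < vnorm v.
Proof.
move=> cos_uv; split.
- case: (vnorm_ge0 u) => // u0.
  by rewrite (vnorm0_vinner _ _ (esym u0)) -u0 in cos_uv; lra.
- case: (vnorm_ge0 v) => // v0.
  by rewrite vinnerC (vnorm0_vinner _ _ (esym v0)) -v0 in cos_uv; lra.
Qed.

Lemma vunit_close {e u v} : (1 - e) * vnorm u * vnorm v < vinner u v ->
  vinner (vsub (vunit v) (vunit u)) (vsub (vunit v) (vunit u)) <= 2 * e.
Proof.
move=> cos_uv; have [u_gt0 v_gt0] := vnorm_gt0_of_cos cos_uv.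
rewrite vinner_subsub !vunit_sqr // vinnerZl vinnerZr (vinnerC v).
set p := vnorm u * vnorm v; have p_gt0 : 0 < p by rewrite /p; nra.
have -> : / vnorm v * (/ vnorm u * vinner u v) = vinner u v / p by rewrite /p; field; lra.
have : 1 - e < vinner u v / p.
  apply: (Rmult_lt_reg_r p) => //; rewrite /Rdiv Rmult_assoc Rinv_l; [rewrite /p; lra | lra].
lra.
Qed.

End InnerProduct.

Lemma inv_INR_succ_le1 k : / (INR k + 1) <= 1.
Proof. by rewrite -Rinv_1; apply: Rinv_le_contravar; [lra | have := pos_INR k; lra]. Qed.

Lemma Un_cv_const r : Un_cv (fun _ => r) r.
Proof. by move=> eps eps_gt0; exists 0%nat => k _; rewrite /Rdist Rminus_diag Rabs_R0. Qed.

Lemma Un_cv_big (I : Type) (r : seq I) (P : pred I) (F : nat -> I -> R) (G : I -> R) :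
  (forall i, Un_cv (fun k => F k i) (G i)) ->
  Un_cv (fun k => \big[Rplus/0]_(i <- r | P i) F k i) (\big[Rplus/0]_(i <- r | P i) G i).
Proof.
move=> FG; elim: r => [|x r IH].
  by apply: (Un_cv_ext (fun _ => 0)) => [k|]; rewrite ?big_nil //; apply: Un_cv_const.
rewrite big_cons; case Px: (P x).
  by apply: (Un_cv_ext _ _ _ _ (CV_plus _ _ _ _ (FG x) IH)) => k; rewrite big_cons Px.
by apply: (Un_cv_ext _ _ _ _ IH) => k; rewrite big_cons Px.
Qed.

Definition strict_incr (phi : nat -> nat) := forall k, lt (phi k) (phi (S k)).

Lemma strict_incr_ge {phi} : strict_incr phi -> forall k, le k (phi k).
Proof. by move=> phi_incr; elim=> [|k IH]; [lia | have := phi_incr k; lia]. Qed.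

Lemma strict_incr_lt {phi} : strict_incr phi -> forall a b, lt a b -> lt (phi a) (phi b).
Proof.
move=> phi_incr a; elim=> [|b IH] ab; first lia.
have := phi_incr b; case: (Nat.eq_dec a b) => [->|ne]; first lia.
by have := IH ltac:(lia); lia.
Qed.

Lemma strict_incr_comp {phi psi} :
  strict_incr phi -> strict_incr psi -> strict_incr (fun k => phi (psi k)).
Proof. by move=> phi_incr psi_incr k; apply: strict_incr_lt. Qed.

Lemma Un_cv_subseq {u l phi} : strict_incr phi -> Un_cv u l -> Un_cv (fun k => u (phi k)) l.
Proof.
move=> phi_incr ul eps eps_gt0; have [N uN] := ul eps eps_gt0.
by exists N => k kN; apply: uN; have := strict_incr_ge phi_incr k; lia.
Qed.

(* The [k]-th term of the subsequence is picked [/ (INR k + 1)]-close to a cluster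
   point given by [Bolzano_Weierstrass]. *)
Lemma bounded_seq_cv_subseq (u : nat -> R) M : (forall k, Rabs (u k) <= M) ->
  exists phi l, strict_incr phi /\ Un_cv (fun k => u (phi k)) l.
Proof.
move=> u_bnd.
have u_in k : - M <= u k <= M.
  by have := u_bnd k; have := Rle_abs (u k); have := Rle_abs (- u k); rewrite Rabs_Ropp; lra.
have [l l_adh] := @Bolzano_Weierstrass u _ (compact_P3 (- M) M) u_in.
have near N k : exists p, le N p /\ Rabs (u p - l) < / (INR k + 1).
  have [p [Np up]] := l_adh (disc l (RinvN k)) N (ex_intro _ (RinvN k) (fun _ h => h)).
  by exists p.
have [g g_spec] := choice (fun Nk p => le Nk.1 p /\ Rabs (u p - l) < / (INR Nk.2 + 1))
  (fun Nk => near Nk.1 Nk.2).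
pose fix phi k := if k is S k' then g (S (phi k'), k) else g (0%nat, 0%nat).
exists phi, l; split=> [k|]; first by have := g_spec (S (phi k), S k); rewrite /=; lia.
move=> eps eps_gt0; have [N RN] := RinvN_cv eps_gt0.
exists N => k kN; have := RN k kN; rewrite /Rdist Rminus_0_r /= Rabs_pos_eq.
  by case: k {kN} => [|k]; [have := g_spec (0%nat, 0%nat) | have := g_spec (S (phi k), S k)];
    rewrite /Rdist /=; lra.
exact: Rlt_le (RinvN_pos k).
Qed.

Section VectorSequences.
Context {n : nat}.
Implicit Types (w q : nat -> vec n) (l : vec n).

Definition vcv w l := forall i, Un_cv (fun k => w k i) (l i).

Lemma vcv_const l : vcv (fun _ => l) l.
Proof. by move=> i; apply: Un_cv_const. Qed.

Lemma vcv_sub {w q l m} : vcv w l -> vcv q m -> vcv (fun k => vsub (w k) (q k)) (vsub l m).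
Proof. by move=> wl qm i; apply: CV_minus. Qed.

Lemma vinner_cv {w q l m} : vcv w l -> vcv q m ->
  Un_cv (fun k => vinner (w k) (q k)) (vinner l m).
Proof. by move=> wl qm; apply: Un_cv_big => i; apply: CV_mult. Qed.

Lemma vcv_close w {q l} {r : nat -> R} : vcv q l ->
  (forall k, vinner (vsub (w k) (q k)) (vsub (w k) (q k)) <= r k) -> Un_cv r 0 ->
  vcv w l.
Proof.
move=> ql wq_r r0 i.
apply: (Un_cv_ext (fun k => q k i + (w k i - q k i))) => [k|]; first ring.
rewrite -[l i]Rplus_0_r; apply: CV_plus => // eps eps_gt0.
have [N rN] := r0 _ (pow_lt _ 2 eps_gt0); exists N => k kN.
have := rN k kN; have := wq_r k; have := sqr_coord_le_vinner (vsub (w k) (q k)) i.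
rewrite /Rdist !Rminus_0_r /vsub => wq_sq wq_le r_lt.
have : (w k i - q k i) ^ 2 < eps ^ 2 by have := Rle_abs (r k); lra.
by move=> ?; apply: Rabs_def1; nra.
Qed.

Lemma bounded_vseq_cv_subseq w {M} : (forall k, vinner (w k) (w k) <= M) ->
  exists phi l, strict_incr phi /\ vcv (fun k => w (phi k)) l.
Proof.
move=> w_bnd.
have coord_bnd k i : Rabs (w k i) <= M + 1.
  have := sqr_coord_le_vinner (w k) i; have := w_bnd k.
  by case: (Rle_dec 0 (w k i)) => ?; [rewrite Rabs_pos_eq | rewrite Rabs_left]; nra.
have extract (s : seq 'I_n) : exists phi, strict_incr phi /\
    forall i, i \in s -> exists li, Un_cv (fun k => w (phi k) i) li.
  elim: s => [|j s [phi [phi_incr IH]]]; first by exists id; split=> // k; lia.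
  have [psi [lj [psi_incr cv_j]]] :=
    bounded_seq_cv_subseq (fun k => w (phi k) j) _ (fun k => coord_bnd _ _).
  exists (fun k => phi (psi k)); split; first exact: strict_incr_comp.
  move=> i; rewrite in_cons => /orP [/eqP ->|i_s]; first by exists lj.
  have [li cv_i] := IH i i_s; exists li.
  exact: Un_cv_subseq psi_incr cv_i.
have [phi [phi_incr cv_all]] := extract (index_enum 'I_n).
have [l l_spec] := choice (fun i li => Un_cv (fun k => w (phi k) i) li)
  (fun i => cv_all i (mem_index_enum i)).
by exists phi, l.
Qed.

End VectorSequences.

Lemma closedS_vcv {n} {S : vec n -> Prop} {w : nat -> vec n} {l} :
  closedS S -> (forall k, S (w k)) -> vcv w l -> S l.
Proof.
move=> S_closed Sw wl; apply: S_closed => eps eps_gt0.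
have := vinner_cv (vcv_sub (vcv_const l) wl) (vcv_sub (vcv_const l) wl).
have -> : vinner (vsub l l) (vsub l l) = 0 by rewrite vinner_subsub; ring.
move=> /(_ _ (pow_lt _ 2 eps_gt0)) [N wN]; exists (w N); split=> //.
have := wN N (le_n N); rewrite /Rdist Rminus_0_r -vnorm_sqr => close.
by have := vnorm_ge0 (vsub l (w N)); have := Rle_abs (vnorm (vsub l (w N)) ^ 2); nra.
Qed.

Lemma exists_approx_inf {T : Type} {P : T -> Prop} (f : T -> R) :
  (exists t, P t) -> (forall t, P t -> 0 <= f t) ->
  exists D, (forall t, P t -> D <= f t) /\
    forall eps, 0 < eps -> exists t, P t /\ f t < D + eps.
Proof.
move=> [t0 Pt0] f_ge0.
have E_bnd : bound (fun r => exists t, P t /\ r = - f t).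
  by exists 0 => _ [t [Pt ->]]; have := f_ge0 t Pt; lra.
have [m [m_ub m_lub]] :=
  completeness _ E_bnd (ex_intro _ (- f t0) (ex_intro _ t0 (conj Pt0 erefl))).
exists (- m); split=> [t Pt|eps eps_gt0].
  by have := m_ub _ (ex_intro _ t (conj Pt erefl)); lra.
apply: NNPP => no_t; have : m <= m - eps; last lra.
apply: m_lub => _ [t [Pt ->]].
have : ~ f t < - m + eps by move=> ?; apply: no_t; exists t.
lra.
Qed.

Section Projection.
Context {n : nat} {S : vec n -> Prop}.
Implicit Types x p s : vec n.

Lemma proj_exists x : closedS S -> (exists s, S s) -> exists p, is_proj S x p.
Proof.
move=> S_closed S_ne.
have [D [D_lb D_approx]] := exists_approx_inf (fun s => vinner (vsub x s) (vsub x s)) S_ne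
  (fun s _ => vinner_ge0 _).
have [s s_spec] := choice
  (fun k sk => S sk /\ vinner (vsub x sk) (vsub x sk) < D + / (INR k + 1))
  (fun k => D_approx _ (RinvN_pos k)).
have s_bnd k : vinner (s k) (s k) <= 2 * (vinner x x + (D + 1)).
  have -> : s k = vsub (vscale 1 x) (vscale 1 (vsub x (s k))) by vec_ext.
  have := vinner_comb_le 1 1 x (vsub x (s k)); have := inv_INR_succ_le1 k.
  have := proj2 (s_spec k); lra.
have [phi [p [phi_incr s_p]]] := bounded_vseq_cv_subseq s s_bnd.
exists p; split; first exact: closedS_vcv S_closed (fun k => proj1 (s_spec (phi k))) s_p.
move=> y Sy; apply/vnorm_le; apply: Rle_trans (D_lb y Sy).
have D_lim : Un_cv (fun k => D + / (INR (phi k) + 1)) D.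
  rewrite -{2}[D]Rplus_0_r; apply: CV_plus; first exact: Un_cv_const.
  exact: Un_cv_subseq phi_incr RinvN_cv.
apply: (Rle_cv_lim _
  (vinner_cv (vcv_sub (vcv_const x) s_p) (vcv_sub (vcv_const x) s_p)) D_lim).
by move=> k; apply: Rlt_le; apply: (proj2 (s_spec (phi k))).
Qed.

Lemma proj_spec x : closedS S -> (exists s, S s) -> is_proj S x (proj S x).
Proof. by move=> S_closed S_ne; apply: epsilon_spec; apply: proj_exists. Qed.

(* Compare [x - p] with [x - (p + t (s - p))] for [t = a / (a + b)]. *)
Lemma proj_obtuse {x p s} : convexS S -> is_proj S x p -> S s ->
  vinner (vsub x p) (vsub s p) <= 0.
Proof.
move=> S_convex [Sp p_min] Ss.
set a := vinner (vsub x p) (vsub s p); set b := vinner (vsub s p) (vsub s p).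
have b_ge0 : 0 <= b by apply: vinner_ge0.
have segment t : 0 <= t <= 1 -> 2 * t * a <= t ^ 2 * b.
  move=> t01; have /vnorm_le := p_min _ (S_convex s p t Ss Sp t01).
  have -> : vsub x (vadd (vscale t s) (vscale (1 - t) p)) =
    vsub (vscale 1 (vsub x p)) (vscale t (vsub s p)) by vec_ext.
  by rewrite (vinner_subsub (vscale 1 _)) !vinnerZl !vinnerZr -/a -/b; lra.
apply: Rnot_lt_le => a_gt0.
set t := a / (a + b).
have t_gt0 : 0 < t by apply: Rdiv_lt_0_compat; lra.
have t_def : t * (a + b) = a by rewrite /t; field; lra.
have t01 : 0 <= t <= 1 by split; nra.
have := segment t t01; have : 0 < t ^ 2 by apply: pow_lt.
nra.
Qed.

Lemma proj_dist_le {x p c} : convexS S -> is_proj S x p -> S c ->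
  vinner (vsub p c) (vsub p c) <= vinner (vsub x c) (vsub x c).
Proof.
move=> S_convex x_p Sc; have := proj_obtuse S_convex x_p Sc.
have -> : vsub x c = vsub (vsub x p) (vsub c p) by vec_ext.
rewrite (vinner_subC p c) (vinner_subsub (vsub x p)).
by have := vinner_ge0 (vsub x p); lra.
Qed.

End Projection.

Section AffineHull.
Context {n : nat}.
Implicit Types (S : vec n -> Prop) (u c s z w : vec n).

Lemma subset_aff S s : S s -> aff S s.
Proof.
move=> Ss; exists [:: (1, s)]; split; first by move=> p [<-|[]].
by split; [rewrite /=; ring | vec_ext].
Qed.

Lemma vinner_aff S u c w : aff S w ->
  (forall s, S s -> vinner u (vsub s c) = 0) -> vinner u (vsub w c) = 0.
Proof.
move=> [l [lS [l_sum ->]]] u_orth.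
suff foldr_eq : vinner u (foldr (fun p v => vadd (vscale p.1 p.2) v) vzero l) =
  foldr (fun p r => p.1 + r) 0 l * vinner u c by rewrite vinnerBr foldr_eq l_sum; ring.
elim: l lS {l_sum} => [|p l IH] lS /=; first by rewrite vinner0r; ring.
rewrite vinnerDr vinnerZr IH; last by move=> q lq; apply: lS; right.
have := u_orth _ (lS p (or_introl erefl)); rewrite vinnerBr => up.
have -> : vinner u p.2 = vinner u c by lra.
ring.
Qed.

Lemma ri_extend S z s : ri S z -> S s ->
  exists t, t < 0 /\ S (vadd (vscale t s) (vscale (1 - t) z)).
Proof.
move=> [Sz [r [r_gt0 z_ball]]] Ss.
set d := vnorm (vsub s z); have d_ge0 : 0 <= d by apply: vnorm_ge0.
set t := - r / (2 * (d + 1)).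
have t_lt0 : t < 0 by apply: Rdiv_neg_pos; lra.
exists t; split=> //; apply: z_ball.
  exists [:: (t, s); (1 - t, z)]; split; first by move=> p /= [<-|[<-|[]]].
  by split; [rewrite /=; ring | vec_ext].
have -> : vsub (vadd (vscale t s) (vscale (1 - t) z)) z = vscale t (vsub s z) by vec_ext.
rewrite vnormZ Rabs_left // -/d.
have -> : - t * d = r * (d / (2 * (d + 1))) by rewrite /t; field; lra.
have : d / (2 * (d + 1)) < 1.
  by apply: (Rmult_lt_reg_r (2 * (d + 1))); [lra | rewrite /Rdiv Rmult_assoc Rinv_l; lra].
by nra.
Qed.

(* Along a line through [z], extended beyond [z] by [ri_extend], the two sign
   constraints force equality. *)
Lemma normal_orth_aff (A B : vec n -> Prop) z u c : ri A z -> ri B z ->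
  (forall s, A s -> vinner u (vsub s c) <= 0) ->
  (forall s, B s -> 0 <= vinner u (vsub s c)) ->
  forall w, aff (setU2 A B) w -> vinner u (vsub w c) = 0.
Proof.
move=> Az Bz A_le B_ge.
have z0 : vinner u (vsub z c) = 0.
  by have := A_le z (proj1 Az); have := B_ge z (proj1 Bz); lra.
have line s t : vinner u (vsub (vadd (vscale t s) (vscale (1 - t) z)) c) =
    t * vinner u (vsub s c).
  have -> : vsub (vadd (vscale t s) (vscale (1 - t) z)) c =
    vadd (vscale t (vsub s c)) (vscale (1 - t) (vsub z c)) by vec_ext.
  by rewrite vinnerDr !vinnerZr z0; ring.
move=> w Lw; apply: (vinner_aff _ _ _ _ Lw) => s [As|Bs].
- have [t [t_lt0 At]] := ri_extend _ _ _ Az As.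
  by have := A_le _ At; rewrite line; have := A_le s As; nra.
- have [t [t_lt0 Bt]] := ri_extend _ _ _ Bz Bs.
  by have := B_ge _ Bt; rewrite line; have := B_ge s Bs; nra.
Qed.

End AffineHull.

Lemma residual_lower_bound {n} theta d (u v : vec n) : 0 <= theta < 1 -> 0 <= d ->
  vinner u v <= theta * vnorm u * vnorm v -> d <= vnorm (vsub (vscale 2 u) v) ->
  (1 - theta) / 5 * Rmax (vnorm u ^ 2) (d ^ 2) <= vnorm (vsub u v) ^ 2.
Proof.
move=> [theta_ge0 theta_lt1] d_ge0 uv_le d_le.
have sum_le : (1 - theta) * (vinner u u + vinner v v) <= vnorm (vsub u v) ^ 2.
  rewrite vnorm_sqr vinner_subsub -!vnorm_sqr.
  have : 0 <= theta * (vnorm u - vnorm v) ^ 2 by apply: Rmult_le_pos => //; apply: pow2_ge_0.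
  lra.
have max_le : Rmax (vnorm u ^ 2) (d ^ 2) <= 5 * (vinner u u + vinner v v).
  apply: Rmax_lub; first by rewrite vnorm_sqr; have := vinner_ge0 u; have := vinner_ge0 v; lra.
  have v1 : vsub (vscale 2 u) v = vsub (vscale 2 u) (vscale 1 v) by vec_ext.
  have := vinner_comb_le 2 1 u v; rewrite -vnorm_sqr -v1.
  by have := vnorm_ge0 (vsub (vscale 2 u) v); nra.
have := vinner_ge0 u; have := vinner_ge0 v; nra.
Qed.

Section DouglasRachford.
Context {n : nat} {A B : vec n -> Prop}.
Hypotheses (A_closed : closedS A) (A_convex : convexS A).
Hypotheses (B_closed : closedS B) (B_convex : convexS B).
Variable c : vec n.
Hypotheses (Ac : A c) (Bc : B c).

Let U x := vsub x (proj A x).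
Let V x := vsub (proj B (refl A x)) (refl A x).

Lemma projA_spec x : is_proj A x (proj A x).
Proof. exact: proj_spec A_closed (ex_intro _ c Ac). Qed.

Lemma projB_spec x : is_proj B x (proj B x).
Proof. exact: proj_spec B_closed (ex_intro _ c Bc). Qed.

Lemma U_normal x s : A s -> vinner (U x) (vsub s (proj A x)) <= 0.
Proof. exact: proj_obtuse A_convex (projA_spec x). Qed.

Lemma V_antinormal x s : B s -> 0 <= vinner (V x) (vsub s (proj B (refl A x))).
Proof.
move=> Bs; have := proj_obtuse B_convex (projB_spec (refl A x)) Bs.
have -> : V x = vscale (-1) (vsub (refl A x) (proj B (refl A x))) by rewrite /V; vec_ext.
by rewrite vinnerZl; lra.
Qed.

Lemma projA_dist_le x : vinner (vsub (proj A x) c) (vsub (proj A x) c)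
  <= vinner (vsub x c) (vsub x c).
Proof. exact: proj_dist_le A_convex (projA_spec x) Ac. Qed.

Lemma projB_reflA_dist_le x :
  vinner (vsub (proj B (refl A x)) c) (vsub (proj B (refl A x)) c)
  <= 10 * vinner (vsub x c) (vsub x c).
Proof.
apply: Rle_trans (proj_dist_le B_convex (projB_spec _) Bc) _.
have -> : vsub (refl A x) c = vsub (vscale 2 (vsub (proj A x) c)) (vscale 1 (vsub x c)).
  by rewrite /refl; vec_ext.
by have := vinner_comb_le 2 1 (vsub (proj A x) c) (vsub x c); have := projA_dist_le x; lra.
Qed.

Lemma U_orth_aff u x : (forall w, aff (setU2 A B) w -> vinner u (vsub w c) = 0) ->
  aff (setU2 A B) x -> vinner u (U x) = 0.
Proof.
move=> u_orth Lx.
have -> : U x = vsub (vsub x c) (vsub (proj A x) c) by rewrite /U; vec_ext.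
rewrite vinnerBr u_orth // u_orth; first ring.
by apply: subset_aff; left; apply: (proj1 (projA_spec x)).
Qed.

Lemma limit_normal_direction (X : nat -> vec n) :
  (forall k, vnorm (vsub (X k) c) <= / (INR k + 1)) ->
  (forall k, (1 - / (INR k + 1)) * vnorm (U (X k)) * vnorm (V (X k))
     < vinner (U (X k)) (V (X k))) ->
  exists phi u, vcv (fun k => vunit (U (X (phi k)))) u /\ vinner u u = 1 /\
    (forall s, A s -> vinner u (vsub s c) <= 0) /\
    (forall s, B s -> 0 <= vinner u (vsub s c)).
Proof.
move=> X_c X_cos.
pose Uh k := vunit (U (X k)); pose Vh k := vunit (V (X k)).
have [U_gt0 V_gt0] : (forall k, 0 < vnorm (U (X k))) /\ (forall k, 0 < vnorm (V (X k))).
  by split=> k; case: (vnorm_gt0_of_cos (X_cos k)).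
have Uh_unit k : vinner (Uh k) (Uh k) = 1 by apply: vunit_sqr.
have [phi [u [phi_incr Uh_u]]] :=
  bounded_vseq_cv_subseq Uh (fun k => Req_le _ _ (Uh_unit k)).
exists phi, u; split=> //.
have e_phi r : Un_cv (fun k => r * / (INR (phi k) + 1)) 0.
  rewrite -(Rmult_0_r r); apply: CV_mult; first exact: Un_cv_const.
  exact: Un_cv_subseq phi_incr RinvN_cv.
have X_sq k : vinner (vsub (X k) c) (vsub (X k) c) <= / (INR k + 1).
  have := X_c k; have := vnorm_ge0 (vsub (X k) c); have := inv_INR_succ_le1 k.
  by rewrite -vnorm_sqr; nra.
have Vh_u : vcv (fun k => Vh (phi k)) u.
  apply: (vcv_close _ Uh_u _ (e_phi 2)) => k.
  exact: vunit_close (X_cos (phi k)).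
have a_c : vcv (fun k => proj A (X (phi k))) c.
  apply: (vcv_close _ (vcv_const c) _ (e_phi 1)) => k.
  by have := projA_dist_le (X (phi k)); have := X_sq (phi k); lra.
have b_c : vcv (fun k => proj B (refl A (X (phi k)))) c.
  apply: (vcv_close _ (vcv_const c) _ (e_phi 10)) => k.
  by have := projB_reflA_dist_le (X (phi k)); have := X_sq (phi k); lra.
split; last split.
- apply: UL_sequence (vinner_cv Uh_u Uh_u) _.
  by apply: (Un_cv_ext (fun _ => 1)) => [k|]; [rewrite Uh_unit | apply: Un_cv_const].
- move=> s As; apply: (Rle_cv_lim _ (vinner_cv Uh_u (vcv_sub (vcv_const s) a_c))
    (Un_cv_const 0)) => k.
  rewrite /Uh /vunit vinnerZl; have := U_normal (X (phi k)) s As.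
  by have := Rinv_0_lt_compat _ (U_gt0 (phi k)); nra.
- move=> s Bs; apply: (Rle_cv_lim _ (Un_cv_const 0)
    (vinner_cv Vh_u (vcv_sub (vcv_const s) b_c))) => k.
  rewrite /Vh /vunit vinnerZl; have := V_antinormal (X (phi k)) s Bs.
  by have := Rinv_0_lt_compat _ (V_gt0 (phi k)); nra.
Qed.

Variable z : vec n.
Hypotheses (Az : ri A z) (Bz : ri B z).

Lemma no_bad_sequence (X : nat -> vec n) :
  (forall k, aff (setU2 A B) (X k)) ->
  (forall k, vnorm (vsub (X k) c) <= / (INR k + 1)) ->
  (forall k, (1 - / (INR k + 1)) * vnorm (U (X k)) * vnorm (V (X k))
     < vinner (U (X k)) (V (X k))) ->
  False.
Proof.
move=> LX X_c X_cos.
have [phi [u [Uh_u [u_unit [A_normal B_antinormal]]]]] :=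
  limit_normal_direction X X_c X_cos.
have u_orth := normal_orth_aff A B z u c Az Bz A_normal B_antinormal.
have u_null : vinner u u = 0.
  apply: UL_sequence (vinner_cv (vcv_const u) Uh_u) _.
  apply: (Un_cv_ext (fun _ => 0)) => [k|]; last exact: Un_cv_const.
  by rewrite /vunit vinnerZr U_orth_aff //; ring.
lra.
Qed.

Lemma angle_bound : exists delta theta, 0 < delta /\ 0 <= theta < 1 /\
  forall x, aff (setU2 A B) x -> vnorm (vsub x c) <= delta ->
    vinner (U x) (V x) <= theta * vnorm (U x) * vnorm (V x).
Proof.
apply: NNPP => no_bound.
have bad k : exists x, aff (setU2 A B) x /\ vnorm (vsub x c) <= / (INR k + 1) /\
    (1 - / (INR k + 1)) * vnorm (U x) * vnorm (V x) < vinner (U x) (V x).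
  apply: NNPP => no_x; apply: no_bound; exists (/ (INR k + 1)), (1 - / (INR k + 1)).
  have := RinvN_pos k; have := inv_INR_succ_le1 k; rewrite /= => e_le1 e_gt0.
  split=> //; split; first lra.
  by move=> x Lx xc; apply: Rnot_lt_le => cos_x; apply: no_x; exists x.
have [X X_spec] := choice _ bad.
by apply: (no_bad_sequence X) => k; case: (X_spec k) => [? [? ?]].
Qed.

End DouglasRachford.

Theorem lemma4p2 (n : nat) (A B : vec n -> Prop)
  (hAc : closedS A) (hAv : convexS A)
  (hBc : closedS B) (hBv : convexS B)
  (hri : exists z, ri A z /\ ri B z)
  (c : vec n) (hcA : A c) (hcB : B c) :
  exists delta theta : R, 0 < delta /\ 0 <= theta < 1 /\
    forall x : vec n, aff (setU2 A B) x -> vnorm (vsub x c) <= delta ->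
      vinner (vsub (proj A x) (refl A x)) (vsub (proj B (refl A x)) (refl A x))
        <= theta * dS A x * dS B (refl A x)
      /\ (1 - theta) / 5 * Rmax (dS A x ^ 2) (dS B x ^ 2)
           <= vnorm (vsub x (Tdr A B x)) ^ 2.
Proof.
have [z [Az Bz]] := hri.
have [delta [theta [delta_gt0 [theta01 angle]]]] :=
  angle_bound hAc hAv hBc hBv c hcA hcB z Az Bz.
exists delta, theta; do 2 split=> //; move=> x Lx xc.
have -> : vsub (proj A x) (refl A x) = vsub x (proj A x) by rewrite /refl; vec_ext.
have -> : dS B (refl A x) = vnorm (vsub (proj B (refl A x)) (refl A x)).
  by rewrite /dS vnorm_subC.
have -> : vsub x (Tdr A B x) =
    vsub (vsub x (proj A x)) (vsub (proj B (refl A x)) (refl A x)).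
  by rewrite /Tdr /refl; vec_ext.
split; first exact: angle.
apply: residual_lower_bound; [done | exact: vnorm_ge0 | exact: angle |].
have -> : vsub (vscale 2 (vsub x (proj A x))) (vsub (proj B (refl A x)) (refl A x)) =
    vsub x (proj B (refl A x)) by rewrite /refl; vec_ext.
exact: (proj2 (projB_spec hBc c hcB x)) _ (proj1 (projB_spec hBc c hcB _)).
Qed.
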